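(* Let $A\in M_2(\mathbb{C})$ with $\operatorname{tr}A=0$ and $q\in\mathbb{R}$. Let $M_A=I\otimes A-q\,A^T\otimes I\in M_4(\mathbb{C})$. Then the operator norm of $M_A$ satisfies $$\|M_A\|_{op}^2\le (1+q^2)\,\|A\|_F^2 .$$
   Context: $\|X\|_F=\sqrt{\operatorname{tr}(XX^\dagger)}$ is the Frobenius norm, $\|X\|_{op}$ is the largest singular value of $X$, $I$ is the $2\times 2$ identity, $A^T$ is the transpose and $\otimes$ the Kronecker product. (With the vectorization $|B\rangle\!\rangle=\sum_{i,j}b_{ij}\,e_j\otimes e_i$ of $B=(b_{ij})$, one has $|AB-qBA\rangle\!\rangle=M_A|B\rangle\!\rangle$ and $\|B\|_F=\||B\rangle\!\rangle\|$.) *)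

From HB Require Import structures.
From mathcomp Require Import all_boot all_order all_algebra.
From mathcomp Require Import complex mxtens.
From mathcomp Require Import boolp classical_sets reals.
Set Implicit Arguments. Unset Strict Implicit. Unset Printing Implicit Defensive.
Import Order.TTheory GRing.Theory Num.Theory.
Local Open Scope ring_scope.
Local Open Scope classical_set_scope.

Definition csqmod (R : realType) (z : R[i]) : R := complex.Re z ^+ 2 + complex.Im z ^+ 2.

Definition frobnorm (R : realType) (m n : nat) (X : 'M[R[i]]_(m, n)) : R :=
  Num.sqrt (\sum_(i < m) \sum_(j < n) csqmod (X i j)).

Definition vnorm (R : realType) (n : nat) (x : 'cV[R[i]]_n) : R :=
  Num.sqrt (\sum_(i < n) csqmod (x i 0)).

Definition opnorm (R : realType) (m n : nat) (M : 'M[R[i]]_(m, n)) : R :=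
  sup [set vnorm (M *m x) | x in [set x : 'cV[R[i]]_n | vnorm x = 1]].

Definition MA (R : realType) (q : R) (A : 'M[R[i]]_2) : 'M[R[i]]_(2 * 2) :=
  (1%:M *t A) - (q%:C)%C *: (A^T *t 1%:M).

From HB Require Import structures.
From mathcomp Require Import all_boot all_order all_algebra.
From mathcomp Require Import complex mxtens.
From mathcomp Require Import boolp classical_sets reals.
From mathcomp Require Import ring.

(* Identify x with the 2 x 2 matrix B it vectorizes: then M_A x is the vectorization of
   AB - qBA, so it suffices to bound ||AB - qBA||_F^2 by (1 + q^2) ||A||_F^2 ||B||_F^2.
   Writing AB - qBA = ((1 - q) S + (1 + q) D) / 2 with S = AB + BA and D = AB - BA turns
   the deficit into a binary quadratic form in (1 - q, 1 + q).  For traceless 2 x 2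
   matrices its diagonal coefficients are sums of squares and its discriminant is
   nonpositive by Cauchy-Schwarz, so the form is nonnegative. *)

Set Implicit Arguments. Unset Strict Implicit. Unset Printing Implicit Defensive.
Import Order.TTheory GRing.Theory Num.Theory.
Local Open Scope ring_scope.
Local Open Scope complex_scope.

Ltac expand_complex :=
  repeat match goal with z : complex _ |- _ => case: z => ? ? end;
  rewrite /csqmod /=;
  first [apply/eqP; rewrite eq_complex /=; apply/andP; split; apply/eqP; ring | ring].

Lemma csqmod_ge0 (R : realType) (u : R[i]) : 0 <= csqmod u.
Proof. by rewrite /csqmod addr_ge0 // sqr_ge0. Qed.

Lemma csqmodM (R : realType) (u v : R[i]) : csqmod (u * v) = csqmod u * csqmod v.
Proof. expand_complex. Qed.

Lemma csqmodN (R : realType) (u : R[i]) : csqmod (- u) = csqmod u.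
Proof. expand_complex. Qed.

Lemma csqmod_conj (R : realType) (u : R[i]) : csqmod u^* = csqmod u.
Proof. expand_complex. Qed.

Lemma sqr_Re_le_csqmod (R : realType) (u : R[i]) : complex.Re u ^+ 2 <= csqmod u.
Proof. by rewrite /csqmod lerDl sqr_ge0. Qed.

Ltac csqmod_nonneg :=
  repeat first [exact: csqmod_ge0 | exact: ler0n | apply: addr_ge0 | apply: mulr_ge0].

Lemma lagrange4 (R : realType) (u1 u2 u3 u4 v1 v2 v3 v4 : R[i]) :
  (csqmod u1 + csqmod u2 + csqmod u3 + csqmod u4)
    * (csqmod v1 + csqmod v2 + csqmod v3 + csqmod v4)
  - csqmod (u1 * v1 + u2 * v2 + u3 * v3 + u4 * v4)
  = csqmod (u1 * v2^* - u2 * v1^*) + csqmod (u1 * v3^* - u3 * v1^*)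
  + csqmod (u1 * v4^* - u4 * v1^*) + csqmod (u2 * v3^* - u3 * v2^*)
  + csqmod (u2 * v4^* - u4 * v2^*) + csqmod (u3 * v4^* - u4 * v3^*).
Proof. expand_complex. Qed.

Lemma cauchy_schwarz4 (R : realType) (u1 u2 u3 u4 v1 v2 v3 v4 : R[i]) :
  csqmod (u1 * v1 + u2 * v2 + u3 * v3 + u4 * v4)
  <= (csqmod u1 + csqmod u2 + csqmod u3 + csqmod u4)
     * (csqmod v1 + csqmod v2 + csqmod v3 + csqmod v4).
Proof. by rewrite -subr_ge0 lagrange4; csqmod_nonneg. Qed.

Lemma quad_form_ge0 (R : realDomainType) (u v P Q K : R) :
  0 <= P -> 0 <= Q -> K ^+ 2 <= P * Q -> 0 <= u ^+ 2 * P + v ^+ 2 * Q - 2 * u * v * K.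
Proof.
move=> P_ge0 Q_ge0 KPQ; have [P0 | P_neq0] := eqVneq P 0.
  have K0 : K = 0 by apply/eqP; rewrite -sqrf_eq0 eq_le sqr_ge0 andbT -(mul0r Q) -P0.
  by rewrite K0 P0 !mulr0 add0r subr0 mulr_ge0 ?sqr_ge0.
have P_gt0 : 0 < P by rewrite lt_def P_neq0.
rewrite -(pmulr_rge0 _ P_gt0).
have -> : P * (u ^+ 2 * P + v ^+ 2 * Q - 2 * u * v * K) =
          (u * P - v * K) ^+ 2 + v ^+ 2 * (P * Q - K ^+ 2) by ring.
by rewrite addr_ge0 ?sqr_ge0 // mulr_ge0 ?sqr_ge0 // subr_ge0.
Qed.

(* A = [[a, b], [c, -a]] and B = [[w, x], [y, z]]: then ||A||^2 = 2|a|^2 + |b|^2 + |c|^2,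
   2 ||B - (tr B / 2) I||^2 = |w - z|^2 + 2|x|^2 + 2|y|^2, tr (AB) = a (w - z) + b y + c x,
   and AB - BA = [[b y - c x, 2 a x - b (w - z)], [c (w - z) - 2 a y, c x - b y]]. *)
Lemma traceless_trmul_defect (R : realType) (a b c w x y z : R[i]) :
  (2 * csqmod a + csqmod b + csqmod c) * (csqmod (w - z) + 2 * csqmod x + 2 * csqmod y)
  - 2 * csqmod (a * (w - z) + b * y + c * x)
  = 2 * csqmod (x * b^* - y * c^*) + csqmod (2 * y * a^* - (w - z) * b^*)
    + csqmod ((w - z) * c^* - 2 * x * a^*).
Proof. expand_complex. Qed.

Lemma traceless_commutator_defect (R : realType) (a b c w x y z : R[i]) :
  (2 * csqmod a + csqmod b + csqmod c) * (csqmod (w - z) + 2 * csqmod x + 2 * csqmod y)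
  - (2 * csqmod (b * y - c * x) + csqmod (2 * a * x - b * (w - z))
     + csqmod (c * (w - z) - 2 * a * y))
  = 2 * csqmod (a * (w - z)^* + b * x^* + c * y^*).
Proof. expand_complex. Qed.

Lemma inner_traceless_commutator_defect_le (R : realType) (a b c w x y z : R[i]) :
  csqmod (2 * a * (b * y - c * x)^* + b * (2 * a * x - b * (w - z))^*
          + c * (c * (w - z) - 2 * a * y)^*)
  <= (2 * csqmod a + csqmod b + csqmod c)
     * ((2 * csqmod a + csqmod b + csqmod c) * (csqmod (w - z) + 2 * csqmod x + 2 * csqmod y)
        - 2 * csqmod (a * (w - z) + b * y + c * x)).
Proof.
have -> : 2 * a * (b * y - c * x)^* + b * (2 * a * x - b * (w - z))^*
          + c * (c * (w - z) - 2 * a * y)^*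
        = (a * (x * b^* - y * c^*) + a * (x * b^* - y * c^*)
           + b * (2 * y * a^* - (w - z) * b^*) + c * ((w - z) * c^* - 2 * x * a^*))^*.
  by expand_complex.
rewrite csqmod_conj traceless_trmul_defect.
have double (r : R) : 2 * r = r + r by rewrite mulr2n mulrDl mul1r.
rewrite !double -!addrA; move: (cauchy_schwarz4 a a b c (x * b^* - y * c^*) (x * b^* - y * c^*)
  (2 * y * a^* - (w - z) * b^*) ((w - z) * c^* - 2 * x * a^*)).
by rewrite -!addrA.
Qed.

Lemma qtraceless_commutator_defect_identity (R : realType) (q : R) (a b c w x y z : R[i]) :
  8 * ((1 + q ^+ 2) * (2 * csqmod a + csqmod b + csqmod c)
         * (csqmod w + csqmod x + csqmod y + csqmod z)
       - (csqmod (a * w + b * y - q%:C * (w * a + x * c))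
          + csqmod (a * x + b * z - q%:C * (w * b - x * a))
          + csqmod (c * w - a * y - q%:C * (y * a + z * c))
          + csqmod (c * x - a * z - q%:C * (y * b - z * a))))
  = 2 * ((1 - q) ^+ 2
           * ((2 * csqmod a + csqmod b + csqmod c)
                * (csqmod (w - z) + 2 * csqmod x + 2 * csqmod y)
              - 2 * csqmod (a * (w - z) + b * y + c * x))
         + (1 + q) ^+ 2
           * ((2 * csqmod a + csqmod b + csqmod c) * csqmod (w + z)
              + ((2 * csqmod a + csqmod b + csqmod c)
                   * (csqmod (w - z) + 2 * csqmod x + 2 * csqmod y)
                 - (2 * csqmod (b * y - c * x) + csqmod (2 * a * x - b * (w - z))
                    + csqmod (c * (w - z) - 2 * a * y))))
         - 2 * (1 - q) * (1 + q)
           * complex.Re ((w + z) * (2 * a * (b * y - c * x)^* + b * (2 * a * x - b * (w - z))^*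
                                    + c * (c * (w - z) - 2 * a * y)^*))).
Proof. expand_complex. Qed.

Lemma qtraceless_commutator_defect_le (R : realType) (q : R) (a b c w x y z : R[i]) :
  csqmod (a * w + b * y - q%:C * (w * a + x * c))
  + csqmod (a * x + b * z - q%:C * (w * b - x * a))
  + csqmod (c * w - a * y - q%:C * (y * a + z * c))
  + csqmod (c * x - a * z - q%:C * (y * b - z * a))
  <= (1 + q ^+ 2) * (2 * csqmod a + csqmod b + csqmod c)
     * (csqmod w + csqmod x + csqmod y + csqmod z).
Proof.
rewrite -subr_ge0 -(@pmulr_rge0 _ 8) // qtraceless_commutator_defect_identity.
set nA := 2 * csqmod a + _ + _; set t := w + z.
set P := nA * _ - 2 * csqmod _; set Q := nA * csqmod t + _.
set K := complex.Re _.
have nA_ge0 : 0 <= nA by rewrite /nA; csqmod_nonneg.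
have P_ge0 : 0 <= P.
  by rewrite /P traceless_trmul_defect; csqmod_nonneg.
have Q_ge : nA * csqmod t <= Q.
  by rewrite /Q traceless_commutator_defect lerDl; csqmod_nonneg.
have KPQ : K ^+ 2 <= P * Q.
  rewrite /K; apply: (le_trans (sqr_Re_le_csqmod _)); rewrite csqmodM.
  apply: (le_trans (ler_wpM2l (csqmod_ge0 t) (inner_traceless_commutator_defect_le a b c w x y z))).
  rewrite -/nA -/P mulrA (mulrC P); apply: ler_wpM2r => //.
  by rewrite mulrC.
have Q_ge0 : 0 <= Q := le_trans (mulr_ge0 nA_ge0 (csqmod_ge0 t)) Q_ge.
by rewrite mulr_ge0 // quad_form_ge0.
Qed.

Lemma sum_ord2 (V : nmodType) (F : 'I_2 -> V) : \sum_(i < 2) F i = F ord0 + F ord_max.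
Proof. by rewrite big_ord_recl big_ord1; congr (_ + F _); apply: val_inj. Qed.

Lemma sum_mxtens_index (V : nmodType) m n (F : 'I_(m * n) -> V) :
  \sum_(k < m * n) F k = \sum_(i < m) \sum_(j < n) F (mxtens_index (i, j)).
Proof.
rewrite pair_big (reindex (@mxtens_index m n)) /=; first by apply: eq_bigr => -[].
by exists (@mxtens_unindex m n) => k _; rewrite (mxtens_indexK, mxtens_unindexK).
Qed.

(* Inverse of the vectorization of the statement: entry (i, j) sits at index e_j (x) e_i. *)
Definition mx_of_vec (R : Type) m n (x : 'cV[R]_(n * m)) : 'M[R]_(m, n) :=
  \matrix_(i, j) x (mxtens_index (j, i)) 0.

Lemma mx_of_vec_tensmx (R : comPzRingType) m n p q (A : 'M[R]_(m, n)) (B : 'M[R]_(p, q))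
    (x : 'cV[R]_(n * q)) :
  mx_of_vec ((A *t B) *m x) = B *m mx_of_vec x *m A^T.
Proof.
apply/matrixP => i k; rewrite !mxE sum_mxtens_index.
apply: eq_bigr => j _; rewrite !mxE mulr_suml; apply: eq_bigr => l _.
by rewrite tensmxE mxE [RHS]mulrC mulrA.
Qed.

Lemma vnorm_mx_of_vec (R : realType) m n (x : 'cV[R[i]]_(n * m)) :
  vnorm x = frobnorm (mx_of_vec x).
Proof.
rewrite /vnorm /frobnorm sum_mxtens_index exchange_big /=.
by congr Num.sqrt; apply: eq_bigr => i _; apply: eq_bigr => j _; rewrite mxE.
Qed.

Lemma mx_of_vec_MA (R : realType) (q : R) (A : 'M[R[i]]_2) (x : 'cV[R[i]]_(2 * 2)) :
  mx_of_vec (MA q A *m x) = A *m mx_of_vec x - q%:C *: (mx_of_vec x *m A).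
Proof.
have mx_of_vecB (u v : 'cV[R[i]]_(2 * 2)) (k : R[i]) :
    mx_of_vec (u - k *: v) = mx_of_vec u - k *: mx_of_vec v.
  by apply/matrixP => i j; rewrite !mxE.
by rewrite mulmxBl -scalemxAl mx_of_vecB !mx_of_vec_tensmx trmx1 mulmx1 trmxK mul1mx.
Qed.

Lemma sqr_frobnorm (R : realType) m n (X : 'M[R[i]]_(m, n)) :
  frobnorm X ^+ 2 = \sum_(i < m) \sum_(j < n) csqmod (X i j).
Proof.
by rewrite sqr_sqrtr //; apply: sumr_ge0 => i _; apply: sumr_ge0 => j _; apply: csqmod_ge0.
Qed.

Lemma frobnorm_qtraceless_commutator_defect (R : realType) (q : R) (A B : 'M[R[i]]_2) :
  \tr A = 0 ->
  frobnorm (A *m B - q%:C *: (B *m A)) ^+ 2 <= (1 + q ^+ 2) * frobnorm A ^+ 2 * frobnorm B ^+ 2.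
Proof.
rewrite /mxtrace sum_ord2 => /eqP; rewrite addrC addr_eq0 => /eqP A11.
rewrite !sqr_frobnorm !sum_ord2 !mxE !sum_ord2 A11 !mulrN !mulNr csqmodN 3!addrA.
set a := A ord0 ord0; set b := A ord0 ord_max; set c := A ord_max ord0.
rewrite (_ : csqmod a + csqmod b + csqmod c + csqmod a = 2 * csqmod a + csqmod b + csqmod c).
  exact: qtraceless_commutator_defect_le.
by ring.
Qed.

Local Open Scope classical_set_scope.

Lemma opnorm_le (R : realType) m n (M : 'M[R[i]]_(m, n)) (k : R) :
  0 <= k -> (forall x, vnorm (M *m x) <= k * vnorm x) -> 0 <= opnorm M <= k.
Proof.
move=> k_ge0 Mk; rewrite /opnorm.
set E := [set vnorm (M *m x) | x in _].
(* E is empty only for n = 0, where sup E = 0 by convention. *)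
have [E0|/set0P [_ [x x1 _]]] := eqVneq E set0; first by rewrite E0 sup0 lexx.
have E_le_k : ubound E k by move=> _ [y /= y1 <-]; rewrite -[k]mulr1 -y1 Mk.
have Ex : E (vnorm (M *m x)) by exists x.
rewrite ge_sup ?andbT //; last by exists (vnorm (M *m x)).
have vnorm_le_sup : vnorm (M *m x) <= sup E by apply: ub_le_sup; first by exists k.
apply: (le_trans _ vnorm_le_sup); exact: sqrtr_ge0.
Qed.

Theorem mainTheorem6 (R : realType) (A : 'M[R[i]]_2) (q : R) :
  \tr A = 0 ->
  opnorm (MA q A) ^+ 2 <= (1 + q ^+ 2) * frobnorm A ^+ 2.
Proof.
move=> trA; set k := (1 + q ^+ 2) * frobnorm A ^+ 2.
have k_ge0 : 0 <= k by rewrite mulr_ge0 ?addr_ge0 ?sqr_ge0.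
have MA_le x : vnorm (MA q A *m x) <= Num.sqrt k * vnorm x.
  rewrite !vnorm_mx_of_vec mx_of_vec_MA -ler_sqr ?nnegrE ?mulr_ge0 ?sqrtr_ge0 //.
  by rewrite exprMn (sqr_sqrtr k_ge0); apply: frobnorm_qtraceless_commutator_defect.
have /andP[opnorm_ge0 opnorm_le_k] := opnorm_le (sqrtr_ge0 k) MA_le.
by rewrite -(sqr_sqrtr k_ge0) ler_sqr ?nnegrE ?sqrtr_ge0.
Qed.
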